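(* Let $\mathcal{Z}$ be a finite pretraining dataset with $|\mathcal{Z}|=m$ and $\mathcal{X}$ a finite finetuning dataset with $|\mathcal{X}|=n$. Let $g(z,W,U)$ be a pretraining loss and $f(x,W,\Theta)$ a finetuning loss, where $W\in\mathbb{R}^{p}$ are shared (embedding) parameters, $U\in\mathbb{R}^{q}$ are pretraining-specific parameters and $\Theta\in\mathbb{R}^{s}$ are finetuning-specific parameters. Define $$G(W,U)=\frac{1}{m}\sum_{z\in\mathcal{Z}}g(z,W,U),\qquad F(W,\Theta)=\frac{1}{n}\sum_{x\in\mathcal{X}}f(x,W,\Theta),$$ $$(W^*,U^* )=\arg\min_{W,U}G(W,U),\qquad \Theta^*=\arg\min_{\Theta}F(W^*,\Theta).$$ For a pretraining example $z$ and a scalar $\epsilon$, define the perturbed solutions $$(\hat W_\epsilon,\hat U_\epsilon)=\arg\min_{W,U}\big\{G(W,U)+\epsilon\, g(z,W,U)\big\},\qquad \hat\Theta_\epsilon=\arg\min_{\Theta}F(\hat W_\epsilon,\Theta),$$ so that $\hat W_0=W^*$, $\hat U_0=U^*$, $\hat\Theta_0=\Theta^*$ (i.e. $W$ is kept fixed during finetuning). Then $$I_{z,W}:=\frac{\partial \hat W_\epsilon}{\partial\epsilon}\Big|_{\epsilon=0}=-\left[\Big(\frac{\partial^2 G(W^*,U^* )}{\partial (W,U)^2}\Big)^{-1}\frac{\partial g(z,W^*,U^* )}{\partial (W,U)}\right]_W$$ and $$I_{z,\Theta}:=\frac{\partial \hat \Theta_\epsilon}{\partial\epsilon}\Big|_{\epsilon=0}=\Big(\frac{\partial^2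 F(W^*,\Theta^* )}{\partial \Theta^2}\Big)^{-1}\frac{\partial^2 F(W^*,\Theta^* )}{\partial \Theta\,\partial W}\left[\Big(\frac{\partial^2 G(W^*,U^* )}{\partial (W,U)^2}\Big)^{-1}\frac{\partial g(z,W^*,U^* )}{\partial (W,U)}\right]_W .$$
   Context: $\frac{\partial}{\partial(W,U)}$ denotes the gradient with respect to the concatenated parameter vector $[W,U]\in\mathbb{R}^{p+q}$, and $\frac{\partial^2 G}{\partial (W,U)^2}$ the corresponding $(p+q)\times(p+q)$ Hessian. $\frac{\partial^2 F}{\partial\Theta^2}$ is the $s\times s$ Hessian of $F$ in $\Theta$, and $\frac{\partial^2 F}{\partial\Theta\,\partial W}$ is the $s\times p$ matrix of mixed second partial derivatives (the Jacobian with respect to $W$ of $\nabla_\Theta F$). For a vector $v\in\mathbb{R}^{p+q}$, $[v]_W\in\mathbb{R}^p$ denotes its $W$-part (first $p$ coordinates). It is assumed that $g$ and $f$ are twice continuously differentiable, the minimizers above are well defined and depend differentiably on $\epsilon$ near $0$, and the Hessians $\frac{\partial^2 G(W^*,U^* )}{\partial (W,U)^2}$ and $\frac{\partial^2 F(W^*,\Theta^* )}{\partial\Theta^2}$ are invertible. *)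

From HB Require Import structures.
From mathcomp Require Import all_boot all_order all_algebra.
From mathcomp Require Import all_classical all_reals all_analysis.
Set Implicit Arguments. Unset Strict Implicit. Unset Printing Implicit Defensive.
Import Order.TTheory GRing.Theory Num.Theory.
Import numFieldNormedType.Exports.
Local Open Scope ring_scope.

Section Defs.
Variable R : realType.

Definition partial k (i : 'I_k) (h : 'cV[R]_k -> R) (x : 'cV[R]_k) : R :=
  'D_(delta_mx i 0) h x.

Definition grad k (h : 'cV[R]_k -> R) (x : 'cV[R]_k) : 'cV[R]_k :=
  \col_i partial i h x.

Definition hessian k (h : 'cV[R]_k -> R) (x : 'cV[R]_k) : 'M[R]_k :=
  \matrix_(i, j) partial j (partial i h) x.

Definition C2 k (h : 'cV[R]_k -> R) : Prop :=
  (forall x, differentiable h x) /\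
  (forall i x, differentiable (partial i h) x) /\
  (forall i j, continuous (partial j (partial i h))).

Definition joint p q (h : 'cV[R]_p -> 'cV[R]_q -> R) : 'cV[R]_(p + q) -> R :=
  fun v => h (usubmx v) (dsubmx v).

Definition avg (T : finType) p q (l : T -> 'cV[R]_p -> 'cV[R]_q -> R)
  : 'cV[R]_p -> 'cV[R]_q -> R :=
  fun W U => (#|T|%:R)^-1 * \sum_(t : T) l t W U.

Definition is_argmin (X : Type) (h : X -> R) (x : X) : Prop :=
  (forall y, h x <= h y) /\ (forall y, h y <= h x -> y = x).

Definition hess_Theta p s (F : 'cV[R]_p -> 'cV[R]_s -> R) W Th : 'M[R]_s :=
  hessian (F W) Th.

Definition mixed_Theta_W p s (F : 'cV[R]_p -> 'cV[R]_s -> R) W Th : 'M[R]_(s, p) :=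
  \matrix_(i, j) partial j (fun W' => partial i (F W') Th) W.

End Defs.

From HB Require Import structures.
From mathcomp Require Import all_boot all_order all_algebra.
From mathcomp Require Import all_classical all_reals all_analysis.
From mathcomp Require Import lra.
Import Order.TTheory GRing.Theory Num.Theory.
Import numFieldNormedType.Exports.
Local Open Scope ring_scope.

(* Implicit differentiation of first-order conditions.  For small |e| the point
   c e = (What e, Uhat e) minimizes G + e g_z, so all its partial derivatives
   vanish: d_i G (c e) + e d_i g_z (c e) = 0 identically in e.  Differentiating
   at e = 0 by the chain rule gives H_G c'(0) + grad g_z = 0, hence
   c'(0) = - H_G^-1 grad g_z, whose W-block is What'(0).  Likewise Thhat e
   minimizes F (What e) _, so d_Theta F (What e, Thhat e) = 0; differentiating
   gives d2_{Theta W} F What'(0) + d2_Theta F Thhat'(0) = 0, which is solved by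
   inverting d2_Theta F. *)

Section Calculus.
Variable R : realType.
Set Implicit Arguments. Unset Strict Implicit.

Lemma derive_eq0_line_min (V : normedModType R) (h : V -> R) (x v : V) :
  (forall y, differentiable h y) -> (forall t : R, h x <= h (t *: v + x)) ->
  'D_v h x = 0.
Proof.
move=> dh hmin; pose phi t := h (t *: v + x).
have -> : 'D_v h x = 'D_1 phi 0.
  rewrite /derive /phi /=.
  suff -> : (fun t : R => t^-1 *: (h ((t%:A + 0 : R) *: v + x) - h (0 *: v + x))) =
    (fun t : R => t^-1 *: (h (t *: v + x) - h x)) by [].
  by apply: funext => t; rewrite scale0r add0r addr0 [_%:A]mulr1.
have dphi t : derivable phi t 1.
  by apply/derivable1_diffP/(@differentiable_comp _ _ _ _ (fun t : R => t *: v + x)).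
have phimin t : t \in `]-1, 1[ -> phi 0 <= phi t.
  by move=> _; rewrite /phi scale0r add0r.
apply: derive_val; apply: (derive1_at_min _ (fun t _ => dphi t)) phimin.
- lra.
- by rewrite in_itv /=; apply/andP; split; lra.
Qed.

Lemma derive_eq0_near0 (V : normedModType R) (phi : R -> V) (delta : R) :
  0 < delta -> (forall e, `|e| < delta -> phi e = 0) -> 'D_1 phi 0 = 0.
Proof.
move=> delta0 phi0; rewrite (near_eq_derive (g := cst 0)) ?derive_cst //.
near=> e; apply: phi0; near: e.
by exists delta => // e /=; rewrite sub0r normrN.
Unshelve. all: by end_near.
Qed.

Lemma derive_col_mx m1 m2 n (A : R -> 'M[R]_(m1, n)) (B : R -> 'M[R]_(m2, n)) t :
  derivable A t 1 -> derivable B t 1 ->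
  derivable (fun e => col_mx (A e) (B e)) t 1 /\
  'D_1 (fun e => col_mx (A e) (B e)) t = col_mx ('D_1 A t) ('D_1 B t).
Proof.
move=> dA dB.
have entry i j : (fun e => col_mx (A e) (B e) i j) =
    match fintype.split i with
    | inl a => fun e => A e a j
    | inr b => fun e => B e b j
    end.
  by apply: funext => e; rewrite mxE; case: fintype.split.
have dC : derivable (fun e => col_mx (A e) (B e)) t 1.
  apply/derivable_mxP => i j; rewrite entry.
  by case: fintype.split => a; exact: (derivable_mxP _ _ _).1.
split => //; apply/matrixP => i j.
by rewrite derive_mx // !mxE entry; case: fintype.split => a; rewrite derive_mx // mxE.
Qed.

Lemma derive_comp_cV k (P : 'cV[R]_k -> R) (c : R -> 'cV[R]_k) t :
  differentiable P (c t) -> derivable c t 1 ->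
  derivable (P \o c) t 1 /\
  'D_1 (P \o c) t = \sum_j partial j P (c t) * ('D_1 c t) j 0.
Proof.
move=> dP /derivable1_diffP dc.
have dPc : differentiable (P \o c) t by exact: differentiable_comp.
split; first exact: diff_derivable.
rewrite deriveE // diff_comp // /= -(@deriveE _ _ _ c t 1 dc).
rewrite [in LHS](matrix_sum_delta ('D_1 c t)) linear_sum.
by apply: eq_bigr => j _; rewrite big_ord1 linearZ /= -deriveE // mulrC.
Qed.

Lemma derive_partial_comp k (J : 'cV[R]_k -> R) (c : R -> 'cV[R]_k) i t :
  differentiable (partial i J) (c t) -> derivable c t 1 ->
  derivable (partial i J \o c) t 1 /\
  'D_1 (partial i J \o c) t = (hessian J (c t) *m 'D_1 c t) i 0.
Proof.
move=> dJ dc; have [dJc ->] := derive_comp_cV dJ dc; split=> //.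
by rewrite mxE; apply: eq_bigr => j _; rewrite mxE.
Qed.

Definition twice_differentiable k (h : 'cV[R]_k -> R) : Prop :=
  (forall x, differentiable h x) /\ (forall i x, differentiable (partial i h) x).

Lemma partialD k (h1 h2 : 'cV[R]_k -> R) i x :
  differentiable h1 x -> differentiable h2 x ->
  partial i (h1 + h2) x = partial i h1 x + partial i h2 x.
Proof. by move=> d1 d2; rewrite /partial deriveD //; exact: diff_derivable. Qed.

Lemma partialZ k (h : 'cV[R]_k -> R) (a : R) i x :
  differentiable h x -> partial i (a \*: h) x = a * partial i h x.
Proof. by move=> d; rewrite /partial deriveZ //; exact: diff_derivable. Qed.

Lemma twice_differentiable0 k : twice_differentiable (0 : 'cV[R]_k -> R).
Proof.
split=> [x|i x]; first exact: differentiable_cst.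
have -> : partial i (0 : 'cV[R]_k -> R) = 0.
  by apply: funext => y; rewrite /partial derive_cst.
exact: differentiable_cst.
Qed.

Lemma twice_differentiableD k (h1 h2 : 'cV[R]_k -> R) :
  twice_differentiable h1 -> twice_differentiable h2 ->
  twice_differentiable (h1 + h2).
Proof.
move=> [d1 dd1] [d2 dd2]; split=> [x|i x]; first exact: differentiableD.
have -> : partial i (h1 + h2) = partial i h1 + partial i h2.
  by apply: funext => y; rewrite partialD.
exact: differentiableD.
Qed.

Lemma twice_differentiableZ k (h : 'cV[R]_k -> R) (a : R) :
  twice_differentiable h -> twice_differentiable (a \*: h).
Proof.
move=> [d dd]; split=> [x|i x]; first exact: differentiableZ.
have -> : partial i (a \*: h) = a \*: partial i h.
  by apply: funext => y; rewrite partialZ.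
exact: differentiableZ.
Qed.

Lemma twice_differentiable_sum (I : Type) k (h : I -> 'cV[R]_k -> R) (r : seq I) :
  (forall t, twice_differentiable (h t)) ->
  twice_differentiable (\sum_(t <- r) h t).
Proof.
move=> dh; apply: (big_ind (@twice_differentiable k)) => //.
- exact: twice_differentiable0.
- exact: twice_differentiableD.
Qed.

Lemma C2_twice_differentiable k (h : 'cV[R]_k -> R) :
  C2 h -> twice_differentiable h.
Proof. by move=> [d [dd _]]. Qed.

Lemma twice_differentiable_avg (T : finType) p q
    (l : T -> 'cV[R]_p -> 'cV[R]_q -> R) :
  (forall t, C2 (joint (l t))) -> twice_differentiable (joint (avg l)).
Proof.
move=> Cl; have -> : joint (avg l) = #|T|%:R^-1 \*: \sum_t joint (l t).
  by apply: funext => v; rewrite fct_sumE.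
apply/twice_differentiableZ/twice_differentiable_sum => t.
exact: C2_twice_differentiable.
Qed.

End Calculus.

Section JointBlocks.
Variables (R : realType) (p s : nat).
Set Implicit Arguments. Unset Strict Implicit.

Lemma derive_col_mxl (J : 'cV[R]_(p + s) -> R) (W v : 'cV[R]_p) (Th : 'cV[R]_s) :
  'D_v (fun W' => J (col_mx W' Th)) W = 'D_(col_mx v 0) J (col_mx W Th).
Proof.
rewrite /derive /=.
suff -> : (fun t : R => t^-1 *: (J (col_mx (t *: v + W) Th) - J (col_mx W Th))) =
  (fun t : R => t^-1 *: (J (t *: col_mx v 0 + col_mx W Th) - J (col_mx W Th))) by [].
by apply: funext => t; rewrite scale_col_mx scaler0 add_col_mx add0r.
Qed.

Lemma derive_col_mxr (J : 'cV[R]_(p + s) -> R) (W : 'cV[R]_p) (Th v : 'cV[R]_s) :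
  'D_v (fun Th' => J (col_mx W Th')) Th = 'D_(col_mx 0 v) J (col_mx W Th).
Proof.
rewrite /derive /=.
suff -> : (fun t : R => t^-1 *: (J (col_mx W (t *: v + Th)) - J (col_mx W Th))) =
  (fun t : R => t^-1 *: (J (t *: col_mx 0 v + col_mx W Th) - J (col_mx W Th))) by [].
by apply: funext => t; rewrite scale_col_mx scaler0 add_col_mx add0r.
Qed.

Lemma partial_joint_dshift (F : 'cV[R]_p -> 'cV[R]_s -> R) W Th i :
  partial i (F W) Th = partial (rshift p i) (joint F) (col_mx W Th).
Proof.
rewrite /partial delta_mx_dshift -derive_col_mxr /joint.
by under eq_fun do rewrite col_mxKu col_mxKd.
Qed.

Lemma dsubmx_hessian_joint (F : 'cV[R]_p -> 'cV[R]_s -> R) W Th :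
  dsubmx (hessian (joint F) (col_mx W Th)) =
  row_mx (mixed_Theta_W F W Th) (hess_Theta F W Th).
Proof.
apply/matrixP => i j; rewrite -(splitK j); case: (fintype.split j) => a /=.
  rewrite row_mxEl !mxE; under [fun W' => _]eq_fun do rewrite partial_joint_dshift.
  by rewrite [RHS]/partial (derive_col_mxl (partial _ _)) -delta_mx_ushift.
rewrite row_mxEr !mxE.
have -> : partial i (F W) = fun Th' => partial (rshift p i) (joint F) (col_mx W Th').
  by apply: funext => Th'; exact: partial_joint_dshift.
by rewrite [RHS]/partial (derive_col_mxr (partial _ _)) -delta_mx_dshift.
Qed.

End JointBlocks.

Section Sensitivity.
Variable R : realType.
Set Implicit Arguments. Unset Strict Implicit.

Lemma derive_perturbed_argmin k (J Jz : 'cV[R]_k -> R) (c : R -> 'cV[R]_k)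
    (delta : R) :
  twice_differentiable J -> twice_differentiable Jz -> 0 < delta ->
  (forall e, `|e| < delta -> forall y, J (c e) + e * Jz (c e) <= J y + e * Jz y) ->
  derivable c 0 1 -> hessian J (c 0) \in unitmx ->
  'D_1 c 0 = - (invmx (hessian J (c 0)) *m grad Jz (c 0)).
Proof.
move=> [dJ ddJ] [dJz ddJz] delta0 cmin dc HJu.
have stationary i e : `|e| < delta ->
    partial i J (c e) + e * partial i Jz (c e) = 0.
  move=> he; rewrite -partialZ // -partialD //; last exact: differentiableZ.
  apply: derive_eq0_line_min => [y|t]; last exact: cmin.
  by apply: differentiableD => //; exact: differentiableZ.
have linearized : hessian J (c 0) *m 'D_1 c 0 = - grad Jz (c 0).
  apply/matrixP => i j; rewrite (ord1 j) [RHS]mxE.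
  apply/eqP; rewrite -addr_eq0 [grad _ _ _ _]mxE; apply/eqP.
  have [dJc DJc] := derive_partial_comp (ddJ i (c 0)) dc.
  have [dJzc _] := derive_partial_comp (ddJz i (c 0)) dc.
  have := derive_eq0_near0 delta0 (stationary i).
  have -> : (fun e => partial i J (c e) + e * partial i Jz (c e)) =
      partial i J \o c + @id R * (partial i Jz \o c) by [].
  have did : derivable (@id R) 0 1 by exact: derivable_id.
  rewrite (deriveD dJc (derivableM did dJzc)) (deriveM did dJzc) DJc derive_id.
  by rewrite scale0r add0r [_ *: 1]mulr1.
by rewrite -(mulKmx HJu ('D_1 c 0)) linearized mulmxN.
Qed.

Lemma derive_partial_argmin p s (F : 'cV[R]_p -> 'cV[R]_s -> R)
    (W : R -> 'cV[R]_p) (Th : R -> 'cV[R]_s) (delta : R) :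
  twice_differentiable (joint F) -> 0 < delta ->
  (forall e, `|e| < delta -> forall y, F (W e) (Th e) <= F (W e) y) ->
  derivable W 0 1 -> derivable Th 0 1 ->
  hess_Theta F (W 0) (Th 0) \in unitmx ->
  'D_1 Th 0 = - (invmx (hess_Theta F (W 0) (Th 0))
                   *m mixed_Theta_W F (W 0) (Th 0) *m 'D_1 W 0).
Proof.
move=> [dJ ddJ] delta0 Thmin dW dTh HTu.
pose c e := col_mx (W e) (Th e).
have [dc Dc] : derivable c 0 1 /\ 'D_1 c 0 = col_mx ('D_1 W 0) ('D_1 Th 0).
  exact: derive_col_mx.
have stationary i e : `|e| < delta -> partial (rshift p i) (joint F) (c e) = 0.
  move=> he; apply: derive_eq0_line_min => [y|t]; first exact: dJ.
  rewrite delta_mx_dshift scale_col_mx scaler0 add_col_mx add0r /joint.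
  by rewrite !col_mxKu !col_mxKd; exact: Thmin.
have linearized : dsubmx (hessian (joint F) (c 0) *m 'D_1 c 0) = 0.
  apply/matrixP => i j; rewrite (ord1 j) [LHS]mxE [RHS]mxE.
  have [_ <-] := derive_partial_comp (ddJ (rshift p i) (c 0)) dc.
  exact: derive_eq0_near0 delta0 (stationary i).
move: linearized; rewrite -mul_dsub_mx dsubmx_hessian_joint Dc mul_row_col.
move/eqP; rewrite addrC addr_eq0 => /eqP linearized.
by rewrite -(mulKmx HTu ('D_1 Th 0)) linearized mulmxN mulmxA.
Qed.

End Sensitivity.

Theorem theorem1 (R : realType) (p q s : nat)
  (Zset Xset : finType)
  (g : Zset -> 'cV[R]_p -> 'cV[R]_q -> R)
  (f : Xset -> 'cV[R]_p -> 'cV[R]_s -> R)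
  (z : Zset)
  (What : R -> 'cV[R]_p) (Uhat : R -> 'cV[R]_q) (Thhat : R -> 'cV[R]_s)
  (delta : R) :
  (forall t, C2 (joint (g t))) ->
  (forall x, C2 (joint (f x))) ->
  0 < delta ->
  (* perturbed pretraining solution: unique minimizer of G + eps * g(z,.) *)
  (forall eps, `|eps| < delta ->
     is_argmin (fun WU : 'cV[R]_p * 'cV[R]_q =>
                  avg g WU.1 WU.2 + eps * g z WU.1 WU.2)
               (What eps, Uhat eps)) ->
  (* finetuning with W fixed: unique minimizer of F(What eps, .) *)
  (forall eps, `|eps| < delta ->
     is_argmin (avg f (What eps)) (Thhat eps)) ->
  (* differentiable dependence on eps near 0 *)
  (forall eps, `|eps| < delta ->
     derivable What eps 1 /\ derivable Uhat eps 1 /\ derivable Thhat eps 1) ->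
  (* invertible Hessians at the unperturbed solutions *)
  hessian (joint (avg g)) (col_mx (What 0) (Uhat 0)) \in unitmx ->
  hess_Theta (avg f) (What 0) (Thhat 0) \in unitmx ->
  let HG := hessian (joint (avg g)) (col_mx (What 0) (Uhat 0)) in
  let gz := grad (joint (g z)) (col_mx (What 0) (Uhat 0)) in
  let v := usubmx (invmx HG *m gz) in
  derive1 What 0 = - v /\
  derive1 Thhat 0 =
    invmx (hess_Theta (avg f) (What 0) (Thhat 0))
      *m mixed_Theta_W (avg f) (What 0) (Thhat 0) *m v.
Proof.
move=> Cg Cf delta0 argG argF dder HGu HFu HG gz v.
have [dW0 [dU0 dTh0]] : derivable What 0 1 /\ derivable Uhat 0 1 /\ derivable Thhat 0 1.
  by apply: dder; rewrite normr0.
pose c e := col_mx (What e) (Uhat e).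
have [dc Dc] : derivable c 0 1 /\ 'D_1 c 0 = col_mx ('D_1 What 0) ('D_1 Uhat 0).
  exact: derive_col_mx.
have Gmin e : `|e| < delta -> forall y,
    joint (avg g) (c e) + e * joint (g z) (c e) <= joint (avg g) y + e * joint (g z) y.
  move=> he y; have := (argG e he).1 (usubmx y, dsubmx y).
  by rewrite /joint /= !col_mxKu !col_mxKd.
have dWhat : 'D_1 What 0 = - v.
  have := derive_perturbed_argmin (twice_differentiable_avg Cg)
    (C2_twice_differentiable (Cg z)) delta0 Gmin dc HGu.
  by rewrite Dc => /(congr1 usubmx); rewrite col_mxKu linearN.
split; first by rewrite derive1E.
have Fmin e : `|e| < delta -> forall y, avg f (What e) (Thhat e) <= avg f (What e) y.
  by move=> he; exact: (argF e he).1.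
rewrite derive1E (derive_partial_argmin (twice_differentiable_avg Cf) delta0 Fmin
  dW0 dTh0 HFu).
by rewrite dWhat mulmxN opprK.
Qed.
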